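(* There is a function $C(t,\epsilon)$ such that the following holds for every positive integer $t$ and every $\epsilon\in(0,1)$: let $G$ be a connected balanced bipartite graph with parts $X,Y$ each of order $n$, with $\delta(G)\geq C(t,\epsilon)$ and with no induced $S_{t,t}$. Then \[|U_X(\epsilon)|,\ |U_Y(\epsilon)|\leq \frac{C(t,\epsilon)}{\delta(G)}\,n.\]
   Context: For positive integers $a,b$, the biclaw $S_{a,b}$ is the graph with vertex set $\{x,x_1,\dots,x_a,y,y_1,\dots,y_b\}$ and edges $xy$, $xy_1,\dots,xy_b$, $yx_1,\dots,yx_a$; ''no induced $S_{t,t}$'' means no induced subgraph isomorphic to $S_{t,t}$. For a bipartite graph with parts $X,Y$, $\Delta_X=\max_{x\in X} d(x)$, $\Delta_Y=\max_{y\in Y}d(y)$, and for $\epsilon\in(0,1)$, $U_X(\epsilon)=\{x\in X: d(x)\leq (1-\epsilon)\Delta_X\}$, $U_Y(\epsilon)=\{y\in Y: d(y)\leq(1-\epsilon)\Delta_Y\}$. $\delta(G)$ is the minimum degree. *)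

From mathcomp Require Import all_boot all_order all_algebra.
Set Implicit Arguments. Unset Strict Implicit. Unset Printing Implicit Defensive.
Import Order.TTheory GRing.Theory Num.Theory.

Definition simple_graph (V : finType) (e : rel V) : Prop :=
  symmetric e /\ irreflexive e.

Definition deg (V : finType) (e : rel V) (v : V) : nat := #|[set w | e v w]|.

(* Minimum degree delta(G) (for nonempty V this is the true minimum, since
   every degree is <= #|V|). *)
Definition mindeg (V : finType) (e : rel V) : nat :=
  \big[minn/#|V|]_(v : V) deg e v.

Definition maxdeg_in (V : finType) (e : rel V) (A : {set V}) : nat :=
  \max_(v in A) deg e v.

Definition bipartite_parts (V : finType) (e : rel V) (X Y : {set V}) : Prop :=
  [disjoint X & Y] /\ X :|: Y = setT /\
  (forall u v, e u v -> (u \in X /\ v \in Y) \/ (u \in Y /\ v \in X)).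

Definition connected (V : finType) (e : rel V) : Prop :=
  forall u v : V, connect e u v.

(* Vertex set of the biclaw S_{a,b}:
   inl true = x, inl false = y, inr (inl i) = x_i, inr (inr j) = y_j. *)
Definition biclaw_V (a b : nat) : finType := (bool + ('I_a + 'I_b))%type.

(* Edges: xy, x y_j (all j), y x_i (all i). *)
Definition biclaw_adj (a b : nat) (u v : biclaw_V a b) : bool :=
  match u, v with
  | inl b1, inl b2 => b1 != b2
  | inl true, inr (inr _) => true
  | inr (inr _), inl true => true
  | inl false, inr (inl _) => true
  | inr (inl _), inl false => true
  | _, _ => false
  end.

Definition has_induced_biclaw (V : finType) (e : rel V) (a b : nat) : Prop :=
  exists f : biclaw_V a b -> V, injective f /\
    forall u v, e (f u) (f v) = biclaw_adj u v.

Definition U_low (R : realFieldType) (V : finType) (e : rel V) (A : {set V})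
  (eps : R) : {set V} :=
  [set v in A | ((deg e v)%:R <= (1 - eps) * (maxdeg_in e A)%:R)%R].

(* Key lemma: if x ~ y and S is a large subset of N(x), fewer than
   K = t (2q)^t neighbours of y miss a 1/q-fraction of S.  Otherwise one picks
   t vertices of S greedily, each missed by a 1/(2q)-fraction of the surviving
   candidates, and t candidates missing all of them form, with x, y and the
   chosen vertices, an induced S_{t,t}.
   Let p0 have maximum degree D in the part P, let the core be the vertices of
   P missing less than a 1/q-fraction of N(p0), and the halo their neighbours.
   The key lemma shows that a halo vertex has fewer than 3K neighbours outside
   the core, that a vertex with a halo neighbour has fewer than 2qt neighbours
   outside the halo, and that having a halo neighbour passes along paths of
   length two, hence by connectivity to all of P.  The set U of vertices of P
   of degree at most (1 - 1/q) D avoids the core, so double counting the edges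
   between U and the halo gives |U| delta <= 6 K |Q|; take q of order 1/eps. *)

From mathcomp Require Import all_boot all_order all_algebra.
From mathcomp Require Import zify lra.
Import Order.TTheory GRing.Theory Num.Theory.
Set Implicit Arguments. Unset Strict Implicit. Unset Printing Implicit Defensive.

Lemma card_set_in_sum (T : finType) (A : {set T}) (p : pred T) :
  #|[set x in A | p x]| = \sum_(x in A) p x.
Proof. by rewrite -sum1dep_card big_mkcondr; apply: eq_bigr => x _; case: (p x). Qed.

Lemma double_counting (T : finType) (A B : {set T}) (r : rel T) :
  \sum_(a in A) #|[set b in B | r a b]| = \sum_(b in B) #|[set a in A | r a b]|.
Proof.
under eq_bigr do rewrite card_set_in_sum.
by rewrite exchange_big; apply: eq_bigr => b _; rewrite card_set_in_sum.
Qed.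

Lemma exists_popular (T : finType) (A B : {set T}) (r : rel T) (c m : nat) :
  (0 < #|B|)%N -> (forall a, a \in A -> m <= c * #|[set b in B | r a b]|)%N ->
  exists2 b, b \in B & (#|A| * m <= c * #|B| * #|[set a in A | r a b]|)%N.
Proof.
move=> B_gt0 A_ge; pose deg_in b := #|[set a in A | r a b]|.
have [b bB maxb] := eq_bigmax_cond deg_in B_gt0.
exists b => //; rewrite -mulnA -[#|[set a in A | r a b]|]/(deg_in b) -maxb.
rewrite -[(#|B| * _)%N]sum_nat_const.
apply: leq_trans (_ : c * \sum_(a in A) #|[set b in B | r a b]| <= _)%N.
  by rewrite big_distrr /= -sum_nat_const; apply: leq_sum.
rewrite leq_mul2l double_counting; apply/orP; right.
by apply: leq_sum => b' b'B; apply: leq_bigmax_cond.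
Qed.

Section GreedyCommonNonNeighbours.
Variables (T : finType) (N : T -> {set T}) (S F : {set T}) (q t : nat).
Hypothesis q_gt0 : (0 < q)%N.
Hypothesis S_large : (2 * q * t <= #|S|)%N.
Hypothesis F_far : forall a, a \in F -> (#|S| <= q * #|S :\: N a|)%N.

Lemma greedy_common_non_neighbours k : (k <= t)%N ->
  exists X : {set T}, [/\ X \subset S, #|X| = k &
    (#|F| <= #|[set a in F | [disjoint X & N a]]| * (2 * q) ^ k)%N].
Proof.
elim: k => [_|k IHk k_lt_t].
  exists set0; split; rewrite ?sub0set ?cards0 // expn0 muln1.
  by apply: subset_leq_card; apply/subsetP => a aF; rewrite inE aF -setI_eq0 set0I eqxx.
have [X [XS cardX F_le]] := IHk (ltnW k_lt_t).
set Fk := [set a in F | _] in F_le; set R := S :\: X.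
have cardR : #|R| = (#|S| - k)%N by rewrite cardsD (setIidPr XS) cardX.
have R_far a : a \in Fk -> (#|S| <= 2 * q * #|[set b in R | b \notin N a]|)%N.
  rewrite inE => /andP [/F_far aS disXa].
  have -> : [set b in R | b \notin N a] = (S :\: N a) :\: X.
    by apply/setP => b; rewrite /R !inE andbAC andbA.
  have X_sub : X \subset S :\: N a.
    by apply/subsetP => b bX; rewrite in_setD (subsetP XS) // (disjointFr disXa bX).
  rewrite cardsD (setIidPr X_sub) cardX; nia.
have R_gt0 : (0 < #|R|)%N by rewrite cardR; nia.
have [b bR popular] := exists_popular R_gt0 R_far.
exists (b |: X); split.
- by rewrite subUset sub1set (subsetP (subsetDl S X)).
- by rewrite cardsU1 cardX; move: bR; rewrite inE => /andP [->].
have -> : [set a in F | [disjoint b |: X & N a]] = [set a in Fk | b \notin N a].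
  apply/setP => a; rewrite !inE -setI_eq0 setIUl setU_eq0 !setI_eq0 disjoints1.
  by rewrite andbCA andbC.
have Fk_le : (#|Fk| <= #|[set a in Fk | b \notin N a]| * (2 * q))%N.
  have R_le : (#|R| <= #|S|)%N by rewrite cardR leq_subr.
  nia.
by apply: leq_trans F_le _; rewrite expnS mulnA leq_mul2r Fk_le orbT.
Qed.

End GreedyCommonNonNeighbours.

Section TriangleFree.
Variables (V : finType) (e : rel V).
Hypothesis e_sym : symmetric e.
Hypothesis e_irr : irreflexive e.
Hypothesis triangle_free : forall u v w, e u v -> e v w -> ~~ e u w.

Lemma induced_biclaw_of_sets t x y (A B : {set V}) :
  e x y -> (t <= #|A|)%N -> (t <= #|B|)%N ->
  {in A, forall a, e y a} -> {in B, forall b, e x b} ->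
  {in A & B, forall a b, ~~ e a b} -> has_induced_biclaw e t t.
Proof.
move=> exy tA tB yA xB nAB.
pose a (i : 'I_t) := enum_val (widen_ord tA i).
pose b (j : 'I_t) := enum_val (widen_ord tB j).
have aA i : a i \in A by apply: enum_valP.
have bB j : b j \in B by apply: enum_valP.
have a_inj : injective a by move=> i i' /enum_val_inj [] /val_inj.
have b_inj : injective b by move=> j j' /enum_val_inj [] /val_inj.
have eyx : e y x by rewrite e_sym.
have ya i : e y (a i) := yA _ (aA i).
have xb j : e x (b j) := xB _ (bB j).
have ab i j : e (a i) (b j) = false by apply/negbTE/nAB.
have xa i : e x (a i) = false by apply/negbTE/(triangle_free exy).
have yb j : e y (b j) = false by apply/negbTE/(triangle_free eyx).
have aa i i' : e (a i) (a i') = false.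
  by apply/negbTE/(triangle_free (v := y)); rewrite // e_sym.
have bb j j' : e (b j) (b j') = false.
  by apply/negbTE/(triangle_free (v := x)); rewrite // e_sym.
pose f (u : biclaw_V t t) := match u with
  | inl true => x | inl false => y | inr (inl i) => a i | inr (inr j) => b j end.
have f_adj u v : e (f u) (f v) = biclaw_adj u v.
  by case: u v => [[]|[i|j]] [[]|[i'|j']] /=;
    rewrite ?e_irr ?exy ?eyx ?xa ?xb ?ya ?yb ?ab ?aa ?bb // e_sym ?xa ?xb ?ya ?yb ?ab.
exists f; split=> // u v fuv.
have same w : biclaw_adj u w = biclaw_adj v w by rewrite -!f_adj fuv.
case: u v fuv same => [[]|[i|j]] [[]|[i'|j']] //= fuv same.
all: first [ by rewrite (a_inj _ _ fuv) | by rewrite (b_inj _ _ fuv)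
           | by move: (same (inl true)) | by move: (same (inl false))
           | by move: (same (inr (inr i))) | by move: (same (inr (inr i')))
           | by move: (same (inr (inl j))) | by move: (same (inr (inl j'))) ].
Qed.

End TriangleFree.

Definition nb (V : finType) (e : rel V) (v : V) : {set V} := [set w | e v w].

Definition far_bound (t q : nat) : nat := t * (2 * q) ^ t.

Lemma far_bound_ge t q : (0 < t)%N -> (0 < q)%N -> (2 * q * t <= far_bound t q)%N.
Proof.
move=> t_gt0 q_gt0; rewrite /far_bound [2 * q * t]mulnC leq_mul2l.
by rewrite -{1}(expn1 (2 * q)) leq_pexp2l ?orbT // muln_gt0 q_gt0.
Qed.

Section BipartiteWithoutBiclaw.
Variables (V : finType) (e : rel V) (P Q : {set V}).
Hypothesis e_sym : symmetric e.
Hypothesis e_irr : irreflexive e.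
Hypothesis PQ_disj : [disjoint P & Q].
Hypothesis e_PQ : forall u v, e u v -> (u \in P /\ v \in Q) \/ (u \in Q /\ v \in P).
Variables t q : nat.
Hypothesis t_gt0 : (0 < t)%N.
Hypothesis q_gt0 : (0 < q)%N.
Hypothesis no_biclaw : ~ has_induced_biclaw e t t.

Lemma edge_P_Q u v : u \in P -> e u v -> v \in Q.
Proof. by move=> uP /e_PQ [[]|[uQ]] //; rewrite (disjointFr PQ_disj uP) in uQ. Qed.

Lemma edge_Q_P u v : u \in Q -> e u v -> v \in P.
Proof. by move=> uQ /e_PQ [[uP]|[]] //; rewrite (disjointFr PQ_disj uP) in uQ. Qed.

Lemma bipartite_triangle_free u v w : e u v -> e v w -> ~~ e u w.
Proof.
move=> euv evw; apply/negP => euw; have [[uP vQ]|[uQ vP]] := e_PQ euv.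
- by have := edge_P_Q uP euw; rewrite (disjointFr PQ_disj (edge_Q_P vQ evw)).
- by have := edge_P_Q vP evw; rewrite (disjointFr PQ_disj (edge_Q_P uQ euw)).
Qed.

Definition far (S : {set V}) (a : V) : bool := (#|S| <= q * #|S :\: nb e a|)%N.

Lemma card_far_nb_lt x y (S : {set V}) :
  e x y -> S \subset nb e x -> (2 * q * t <= #|S|)%N ->
  (#|[set a in nb e y | far S a]| < far_bound t q)%N.
Proof.
move=> exy Sx S_large; set F := [set a in _ | _].
rewrite ltnNge; apply/negP => F_large.
have F_far a : a \in F -> far S a by rewrite inE => /andP [].
have [X [XS cardX F_le]] := greedy_common_non_neighbours q_gt0 S_large F_far (leqnn t).
apply: no_biclaw.
apply: (induced_biclaw_of_sets e_sym e_irr bipartite_triangle_free exy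
          (A := [set a in F | [disjoint X & nb e a]]) (B := X)).
- rewrite -(@leq_pmul2r ((2 * q) ^ t)) ?expn_gt0 ?muln_gt0 ?q_gt0 //.
  exact: leq_trans F_large F_le.
- by rewrite cardX.
- by move=> a; rewrite !inE => /andP [/andP []].
- by move=> b /(subsetP XS) /(subsetP Sx); rewrite inE.
- move=> a b; rewrite inE => /andP [_ disXa] bX.
  by have := disjointFr disXa bX; rewrite inE => ->.
Qed.

Section CoreAndHalo.
Hypothesis q_ge4 : (4 <= q)%N.
Variable delta : nat.
Hypothesis delta_le_deg : forall v, (delta <= #|nb e v|)%N.
Hypothesis delta_large : (6 * far_bound t q <= delta)%N.
Hypothesis e_connected : connected e.
Variable p0 : V.
Hypothesis p0P : p0 \in P.

Local Notation K := (far_bound t q).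
Local Notation B := (nb e p0).

Definition core : {set V} := [set a in P | ~~ far B a].
Definition halo : {set V} := [set y in Q | [exists a in core, e a y]].
Definition attached (x : V) : bool := [exists y in halo, e x y].

Let K_ge : (2 * q * t <= K)%N := far_bound_ge t_gt0 q_gt0.

Lemma core_nb_in_halo a z : a \in core -> e a z -> z \in halo.
Proof.
move=> a_core eaz; rewrite inE; apply/andP; split.
  by apply: edge_P_Q eaz; move: a_core; rewrite inE => /andP [].
by apply/existsP; exists a; rewrite a_core.
Qed.

Lemma nb_notin_halo v z : ~~ attached v -> e v z -> z \notin halo.
Proof. by move=> /existsPn /(_ z) v_natt evz; move: v_natt; rewrite evz andbT. Qed.

Lemma core_deg_gt x : x \in core -> ((q - 1) * #|B| < q * #|nb e x|)%N.
Proof.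
rewrite inE /far -ltnNge => /andP [_ near].
have split_B : (#|B :&: nb e x| + #|B :\: nb e x| = #|B|)%N by rewrite cardsID.
have BxN : (#|B :&: nb e x| <= #|nb e x|)%N by rewrite subset_leq_card ?subsetIr.
nia.
Qed.

Lemma card_far_half_le :
  (#|[set a in P | far B a & #|B| <= 2 * #|B :&: nb e a|]| <= 2 * K)%N.
Proof.
set W := [set a in P | _].
have B_large : (2 * q * t <= #|B|)%N by have := delta_le_deg p0; lia.
have B_gt0 : (0 < #|B|)%N by nia.
have few_in_W b : b \in B -> (#|[set a in W | e a b]| <= K)%N.
  rewrite inE => p0b; apply/ltnW/(leq_ltn_trans _ (card_far_nb_lt p0b (subxx _) B_large)).
  apply: subset_leq_card; apply/subsetP => a; rewrite !inE => /andP [/and3P [_ farB _] eab].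
  by rewrite e_sym eab.
have W_to_B : (#|W| * #|B| <= 2 * \sum_(a in W) #|[set b in B | e a b]|)%N.
  rewrite big_distrr /= -sum_nat_const; apply: leq_sum => a; rewrite inE => /and3P [_ _ half].
  by rewrite (_ : [set b in B | e a b] = B :&: nb e a) //; apply/setP => b; rewrite !inE.
have B_to_W : (\sum_(b in B) #|[set a in W | e a b]| <= #|B| * K)%N.
  by rewrite -sum_nat_const; apply: leq_sum => b /few_in_W.
rewrite double_counting in W_to_B; nia.
Qed.

Lemma card_nb_diff_core_lt h y : h \in core -> e h y -> (#|nb e y :\: core| < 3 * K)%N.
Proof.
rewrite inE /far -ltnNge => /andP [hP near_h] ehy.
set S := B :&: nb e h.
have split_B : (#|S| + #|B :\: nb e h| = #|B|)%N by rewrite cardsID.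
have S_large : (2 * q * t <= #|S|)%N by have := delta_le_deg p0; nia.
have few_far := card_far_nb_lt ehy (subsetIr _ _) S_large.
set F := [set a in _ | _] in few_far.
have W_small := card_far_half_le.
set W := [set a in P | _] in W_small.
suff sub : nb e y :\: core \subset F :|: W.
  by have := leq_trans (subset_leq_card sub) (leq_card_setU _ _); lia.
apply/subsetP => a; rewrite in_setD in_setU => /andP [a_core ya].
have aP : a \in P by apply: edge_Q_P (edge_P_Q hP ehy) _; rewrite inE in ya.
apply/orP; have [farS | near_S] := boolP (far S a); [by left; rewrite inE ya | right].
rewrite /far -ltnNge in near_S.
have B_miss : (#|B :\: nb e a| <= #|B :\: nb e h| + #|S :\: nb e a|)%N.
  apply: leq_trans (leq_card_setU _ _); apply: subset_leq_card.
  by apply/subsetP => z; rewrite !inE; case: (e p0 z); case: (e h z); case: (e a z).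
have split_Ba : (#|B :&: nb e a| + #|B :\: nb e a| = #|B|)%N by rewrite cardsID.
by move: a_core; rewrite !inE aP negbK => -> /=; nia.
Qed.

Lemma card_nb_diff_halo_lt x : attached x -> (#|nb e x :\: halo| < 2 * q * t)%N.
Proof.
case/existsP => y /andP [y_halo exy]; rewrite ltnNge; apply/negP => S_large.
have few_far := card_far_nb_lt exy (subsetDl _ _) S_large.
have [h h_core ehy] : exists2 h, h \in core & e h y.
  by move: y_halo; rewrite inE => /andP [_ /existsP [h /andP [h_core ehy]]]; exists h.
have few_out := card_nb_diff_core_lt h_core ehy.
have sub : nb e y :&: core \subset [set a in nb e y | far (nb e x :\: halo) a].
  apply/subsetP => a; rewrite in_setI inE => /andP [ya a_core]; rewrite ya /far.
  rewrite (_ : _ :\: nb e a = nb e x :\: halo) ?leq_pmull //.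
  apply/setP => z; rewrite !in_setD [z \in nb e a]inE.
  by case: (boolP (e a z)) => //= eaz; rewrite (core_nb_in_halo a_core eaz).
have split_y : (#|nb e y :&: core| + #|nb e y :\: core| = #|nb e y|)%N by rewrite cardsID.
have := subset_leq_card sub; have := delta_le_deg y; lia.
Qed.

Lemma attached_step x u v : attached x -> e x u -> e u v -> attached v.
Proof.
move=> x_att exu euv; apply: contraT => v_natt.
have evu : e v u by rewrite e_sym.
have Nv_large : (2 * q * t <= #|nb e v|)%N by have := delta_le_deg v; nia.
have few_v := card_far_nb_lt evu (subxx _) Nv_large.
set S := nb e x :&: halo.
have S_large : (2 * q * t <= #|S|)%N.
  have : (#|S| + #|nb e x :\: halo| = #|nb e x|)%N by rewrite cardsID.
  by have := card_nb_diff_halo_lt x_att; have := delta_le_deg x; nia.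
have few_S : (#|[set a in nb e u | far S a]| < K)%N.
  exact: card_far_nb_lt exu (subsetIl _ _) S_large.
have : ~~ (nb e u \subset [set a in nb e u | far (nb e v) a] :|: [set a in nb e u | far S a]).
  apply/negP => sub; have := leq_trans (subset_leq_card sub) (leq_card_setU _ _).
  by have := delta_le_deg u; lia.
case/subsetPn => a ua; have eua : e u a by rewrite inE in ua.
rewrite in_setU !inE eua /= negb_or.
case/andP => near_v near_S.
have a_att : attached a.
  apply: contraT => a_natt; move: near_S; rewrite /far (_ : S :\: nb e a = S) ?leq_pmull //.
  apply/setP => z; rewrite !in_setD [z \in nb e a]inE; case: (boolP (e a z)) => //= eaz.
  by rewrite in_setI (negbTE (nb_notin_halo a_natt eaz)) andbF.
have sub : nb e v :&: nb e a \subset nb e a :\: halo.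
  apply/subsetP => z; rewrite in_setI in_setD => /andP [vz ->]; rewrite andbT.
  by apply: nb_notin_halo v_natt _; rewrite inE in vz.
have common_le := subset_leq_card sub.
have common_lt := card_nb_diff_halo_lt a_att.
have split_v : (#|nb e v :&: nb e a| + #|nb e v :\: nb e a| = #|nb e v|)%N by rewrite cardsID.
rewrite /far -ltnNge in near_v.
have near_v4 : (4 * #|nb e v :\: nb e a| < #|nb e v|)%N.
  by apply: leq_ltn_trans near_v; rewrite leq_mul2r q_ge4 orbT.
have := delta_le_deg v; have := K_ge.
clear -common_le common_lt split_v near_v4 delta_large; lia.
Qed.

Lemma attached_all x : x \in P -> attached x.
Proof.
(* Attachment only spreads along paths of length two, hence the parity split. *)
pose good v := if v \in P then attached v else [exists u, attached u && e u v].
have good_step u v : e u v -> good u -> good v.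
  rewrite /good => euv; have [[uP vQ]|[uQ vP]] := e_PQ euv.
    by rewrite uP (disjointFl PQ_disj vQ) => u_att; apply/existsP; exists u; rewrite u_att.
  rewrite vP (disjointFl PQ_disj uQ) => /existsP [w /andP [w_att ewu]].
  exact: attached_step w_att ewu euv.
have good_closed : closed e good.
  by move=> u v euv; apply/idP/idP; apply: good_step; rewrite // e_sym.
have B_gt0 : (0 < #|B|)%N by have := delta_le_deg p0; nia.
have p0_att : attached p0.
  have [z p0z] := card_gt0P B_gt0; apply/existsP; exists z; rewrite inE in p0z.
  rewrite p0z andbT; apply: core_nb_in_halo p0z.
  by rewrite /core inE; apply/andP; split; rewrite // /far -ltnNge setDv cards0 muln0.
move=> xP; have : good p0 = good x := closed_connect good_closed (e_connected p0 x).
by rewrite /good p0P xP p0_att.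
Qed.

Lemma card_low_deg_le :
  (#|[set x in P | q * #|nb e x| <= (q - 1) * #|B|]| * delta <= 6 * K * #|Q|)%N.
Proof.
set U := [set x in P | _].
have U_to_halo : (#|U| * delta <= 2 * \sum_(x in U) #|[set y in halo | e x y]|)%N.
  rewrite big_distrr /= -sum_nat_const; apply: leq_sum => x; rewrite inE => /andP [xP _].
  rewrite (_ : [set y in halo | e x y] = nb e x :&: halo); last first.
    by apply/setP => y; rewrite in_set in_setI andbC [y \in nb e x]inE.
  have : (#|nb e x :&: halo| + #|nb e x :\: halo| = #|nb e x|)%N by rewrite cardsID.
  by have := card_nb_diff_halo_lt (attached_all xP); have := delta_le_deg x; nia.
have halo_to_U : (\sum_(y in halo) #|[set x in U | e x y]| <= #|halo| * (3 * K))%N.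
  rewrite -sum_nat_const; apply: leq_sum => y.
  rewrite inE => /andP [_ /existsP [h /andP [h_core ehy]]].
  apply/ltnW/(leq_ltn_trans _ (card_nb_diff_core_lt h_core ehy)); apply: subset_leq_card.
  apply/subsetP => x; rewrite in_set [x \in U]inE => /andP [/andP [_ low] exy].
  rewrite in_setD [x \in nb e y]inE e_sym exy andbT.
  by apply/negP => /core_deg_gt; rewrite ltnNge low.
have halo_le : (#|halo| <= #|Q|)%N.
  by apply/subset_leq_card/subsetP => y; rewrite inE => /andP [].
rewrite double_counting in U_to_halo; nia.
Qed.
End CoreAndHalo.
End BipartiteWithoutBiclaw.

Lemma mindeg_le (V : finType) (e : rel V) v : (mindeg e <= deg e v)%N.
Proof. exact: (bigmin_le _ v (deg e)). Qed.

Local Open Scope ring_scope.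

Lemma card_U_low_le (R : realFieldType) (V : finType) (e : rel V) (P Q : {set V})
    (t q : nat) (eps C : R) :
  symmetric e -> irreflexive e -> [disjoint P & Q] ->
  (forall u v, e u v -> (u \in P /\ v \in Q) \/ (u \in Q /\ v \in P)) -> connected e ->
  (0 < t)%N -> ~ has_induced_biclaw e t t -> (4 <= q)%N -> 1 <= q%:R * eps ->
  (6 * far_bound t q)%:R <= C -> C <= (mindeg e)%:R ->
  #|U_low e P eps|%:R <= C / (mindeg e)%:R * #|Q|%:R.
Proof.
move=> e_sym e_irr PQ_disj e_PQ e_conn t_gt0 no_biclaw q_ge4 q_eps K_le_C C_le_delta.
have q_gt0 : (0 < q)%N by apply: leq_trans q_ge4.
have K_le_delta : (6 * far_bound t q <= mindeg e)%N by rewrite -(ler_nat R) (le_trans K_le_C).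
have delta_gt0 : (0 < mindeg e)%N by have := far_bound_ge t_gt0 q_gt0; nia.
suff U_le : (#|U_low e P eps| * mindeg e <= 6 * far_bound t q * #|Q|)%N.
  rewrite mulrAC ler_pdivlMr ?ltr0n // -natrM.
  by apply: le_trans (ler_wpM2r (ler0n _ _) K_le_C); rewrite -natrM ler_nat.
have [P0 | P_gt0] := posnP #|P|.
  have : (#|U_low e P eps| <= #|P|)%N.
    by apply/subset_leq_card/subsetP => x; rewrite inE => /andP [].
  by rewrite P0 leqn0 => /eqP ->.
have [p0 p0P maxP] := eq_bigmax_cond (deg e) P_gt0.
apply: leq_trans (card_low_deg_le e_sym e_irr PQ_disj e_PQ t_gt0 q_gt0 no_biclaw q_ge4
  (fun v => mindeg_le e v) K_le_delta e_conn p0P).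
rewrite leq_mul2r; apply/orP; right; apply/subset_leq_card/subsetP => x.
rewrite !inE => /andP [xP low]; rewrite xP /= -(ler_nat R) natrM natrM natrB //.
move: low; rewrite /maxdeg_in maxP /deg => low.
by have := ler0n R #|nb e p0|; have := ler0n R q; nra.
Qed.

Definition biclaw_const (R : realFieldType) (t : nat) (eps : R) : R :=
  6%:R * t%:R * (16%:R / eps) ^+ t.

Lemma far_bound_le_const (R : realFieldType) t q (eps : R) :
  0 < eps -> (2 * q)%:R * eps <= 16%:R ->
  (6 * far_bound t q)%:R <= biclaw_const t eps.
Proof.
move=> eps_gt0 q_eps; rewrite /biclaw_const /far_bound !natrM mulrA natrX.
rewrite ler_wpM2l ?mulr_ge0 //.
by apply: lerXn2r; rewrite ?nnegrE ?divr_ge0 ?(ltW eps_gt0) // ler_pdivlMr.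
Qed.

Lemma inv_eps_le_const (R : realFieldType) t (eps : R) :
  (0 < t)%N -> 0 < eps -> eps < 1 -> 16%:R / eps <= biclaw_const t eps.
Proof.
move=> t_gt0 eps_gt0 eps_lt1.
have ge1 : 1 <= 16%:R / eps by rewrite ler_pdivlMr // mul1r (le_trans (ltW eps_lt1)) ?ler1n.
have ge0 : 0 <= 16%:R / eps := le_trans ler01 ge1.
apply: (@le_trans _ _ ((16%:R / eps) ^+ t)).
  by case: t t_gt0 => // t _; rewrite exprS ler_peMr ?exprn_ege1.
by rewrite ler_peMl ?exprn_ge0 // -natrM ler1n muln_gt0 t_gt0.
Qed.

(* [R] need not be archimedean: the natural number [d] is what guarantees a [q]
   with [1 <= q * eps]. *)
Lemma exists_scale (R : realFieldType) (eps : R) (d : nat) :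
  0 < eps -> eps < 1 -> 1 <= d%:R * eps ->
  exists2 q : nat, (4 <= q)%N & 1 <= q%:R * eps /\ (2 * q)%:R * eps <= 16%:R.
Proof.
move=> eps_gt0 eps_lt1 d_eps.
have [m m_eps m_min] := ex_minnP (ex_intro (fun m : nat => 1 <= m%:R * eps) d d_eps).
have m_gt0 : (0 < m)%N by case: m m_eps {m_min} => //; rewrite mul0r ler10.
have m_eps_lt2 : m%:R * eps < 2%:R.
  have : ~~ (1 <= m.-1%:R * eps) by apply/negP => /m_min; rewrite leqNgt ltn_predL m_gt0.
  rewrite -ltNge; case: m m_gt0 {m_eps m_min} => // m _ /=.
  by rewrite -addn1 !natrD mulrDl mul1r => ?; rewrite ltrD.
exists (4 * m)%N; first by rewrite leq_pmulr.
rewrite !natrM; split; lra.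
Qed.

Theorem mainTheorem11 (R : realFieldType) :
  exists C : nat -> R -> R,
  forall (t : nat) (eps : R), (0 < t)%N -> 0 < eps -> eps < 1 ->
  forall (V : finType) (e : rel V) (X Y : {set V}) (n : nat),
    simple_graph e -> bipartite_parts e X Y -> connected e ->
    #|X| = n -> #|Y| = n ->
    C t eps <= (mindeg e)%:R ->
    ~ has_induced_biclaw e t t ->
    (#|U_low e X eps|%:R <= C t eps / (mindeg e)%:R * n%:R) /\
    (#|U_low e Y eps|%:R <= C t eps / (mindeg e)%:R * n%:R).
Proof.
exists (@biclaw_const R).
move=> t eps t_gt0 eps_gt0 eps_lt1 V e X Y n [e_sym e_irr] [XY_disj [_ e_XY]] e_conn
  cardX cardY C_le_delta no_biclaw.
have delta_eps : 1 <= (mindeg e)%:R * eps.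
  have := le_trans (inv_eps_le_const t_gt0 eps_gt0 eps_lt1) C_le_delta.
  by rewrite ler_pdivrMr // => /(le_trans _); apply; rewrite ler1n.
have [q q_ge4 [q_eps q_eps_le]] := exists_scale eps_gt0 eps_lt1 delta_eps.
have K_le_C := far_bound_le_const t eps_gt0 q_eps_le.
have e_YX u v : e u v -> (u \in Y /\ v \in X) \/ (u \in X /\ v \in Y).
  by move=> /e_XY [] []; [right | left].
split; [rewrite -cardY | rewrite -cardX].
- exact: card_U_low_le e_sym e_irr XY_disj e_XY e_conn t_gt0 no_biclaw q_ge4 q_eps
    K_le_C C_le_delta.
- by apply: card_U_low_le e_sym e_irr _ e_YX e_conn t_gt0 no_biclaw q_ge4 q_eps
    K_le_C C_le_delta; rewrite disjoint_sym.
Qed.
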